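(* Let $f \in \mathrm{Inj}(\Omega)$ have at least one infinite cycle, and let $n \in \mathbb{Z}_+$. Then there is a transposition $h \in \mathrm{Fin}(\Omega)$ such that $(fh)\mathrm{C}_n = (f)\mathrm{C}_n + 1$ and $(fh)\mathrm{C}_m = (f)\mathrm{C}_m$ for all $m \in \mathbb{Z}_+ \setminus \{n\}$.
   Context: $\Omega$ is a countably infinite set; maps are written on the right and composed left to right. $\mathrm{Inj}(\Omega)$ is the monoid of injective maps $\Omega\to\Omega$; $\mathrm{Fin}(\Omega)$ the group of permutations moving only finitely many points. For $f\in\mathrm{Inj}(\Omega)$, a cycle of $f$ is a nonempty $\Sigma\subseteq\Omega$ such that (a) for all $\alpha\in\Omega$, $(\alpha)f\in\Sigma$ iff $\alpha\in\Sigma$, and (b) no proper nonempty subset of $\Sigma$ satisfies (a). For $n\in\mathbb{Z}_+$, $(f)\mathrm{C}_n$ is the cardinal number of cycles of $f$ of cardinality $n$ (cardinal arithmetic, so $\aleph_0+1=\aleph_0$). *)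

(* Sets of points are predicates Omega -> Prop; cardinal
   equalities of sets of cycles are expressed by explicit bijections. *)
From Stdlib Require Import List.
Import ListNotations.

(* Maps are written on the right and composed left to right:
   (x)(fh) = ((x)f)h, i.e. [comp f h x = h (f x)]. *)
Definition comp {O : Type} (f h : O -> O) : O -> O := fun x => h (f x).

Definition injective {O : Type} (f : O -> O) : Prop :=
  forall x y, f x = f y -> x = y.

Definition countably_infinite (O : Type) : Prop :=
  exists (e : nat -> O) (e' : O -> nat),
    (forall k, e' (e k) = k) /\ (forall x, e (e' x) = x).

Definition f_invariant {O : Type} (f : O -> O) (S : O -> Prop) : Prop :=
  forall a, S (f a) <-> S a.

Definition is_cycle {O : Type} (f : O -> O) (S : O -> Prop) : Prop :=
  (exists x, S x) /\ f_invariant f S /\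
  forall T : O -> Prop,
    (forall x, T x -> S x) -> (exists x, T x) -> f_invariant f T ->
    forall x, S x -> T x.

Definition has_card {O : Type} (S : O -> Prop) (n : nat) : Prop :=
  exists l : list O, NoDup l /\ length l = n /\ forall x, S x <-> In x l.

Definition is_finite {O : Type} (S : O -> Prop) : Prop :=
  exists l : list O, forall x, S x -> In x l.

(* The set of cycles of f of cardinality n; its cardinal is (f)C_n. *)
Definition cycles_of_size {O : Type} (f : O -> O) (n : nat) : Type :=
  { S : O -> Prop | is_cycle f S /\ has_card S n }.

Definition equipotent (A B : Type) : Prop :=
  exists (g : A -> B) (g' : B -> A),
    (forall a, g' (g a) = a) /\ (forall b, g (g' b) = b).

(* h is a transposition (a b) of Omega (hence h lies in Fin(Omega)). *)
Definition is_transposition {O : Type} (h : O -> O) : Prop :=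
  exists a b : O, a <> b /\ h a = b /\ h b = a /\
    forall x, x <> a -> x <> b -> h x = x.

From Stdlib Require Import List Lia Classical ClassicalEpsilon
  FunctionalExtensionality PropExtensionality ProofIrrelevance FinFun.

(** Pick a point [a] on an infinite cycle [T] of [f], put [b := (a)f^n] and
    [h := (a b)].  Then [fh] sends [(a)f^(n-1)] back to [a], so
    [C := {a, (a)f, ..., (a)f^(n-1)}] becomes a cycle of size [n], the rest
    [T \ C] is still one infinite cycle (generated by [b]), and [fh = f]
    outside [T].  Hence the finite cycles of [fh] are those of [f] together
    with [C]. *)

Section CycleBasics.
Context {O : Type}.
Implicit Types (g : O -> O) (A B R S T U : O -> Prop).

Lemma f_invariant_setU g A B :
  f_invariant g A -> f_invariant g B -> f_invariant g (fun x => A x \/ B x).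
Proof. intros HA HB x. specialize (HA x); specialize (HB x); tauto. Qed.

Lemma f_invariant_setD g A B :
  f_invariant g A -> f_invariant g B -> f_invariant g (fun x => A x /\ ~ B x).
Proof. intros HA HB x. specialize (HA x); specialize (HB x); tauto. Qed.

Lemma f_invariant_of_image g S : injective g ->
  (forall x, S x -> S (g x)) -> (forall y, S y -> exists x, S x /\ g x = y) ->
  f_invariant g S.
Proof.
  intros Hg Hfw Hpre x; split; [|apply Hfw].
  intros Sgx. destruct (Hpre _ Sgx) as [x' [Sx' E]].
  rewrite <- (Hg _ _ E). exact Sx'.
Qed.

Lemma f_invariant_iter g S a : f_invariant g S -> S a -> forall k, S (Nat.iter k g a).
Proof. intros HS Sa k; induction k; simpl; [exact Sa | apply HS, IHk]. Qed.

(* If [S \ U] were a smaller invariant set it would contain [p], so it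
   suffices to test invariant subsets through [p]. *)
Lemma is_cycle_of_generator g S p : f_invariant g S -> S p ->
  (forall U, (forall x, U x -> S x) -> f_invariant g U -> U p -> forall x, S x -> U x) ->
  is_cycle g S.
Proof.
  intros HS Sp Hgen. split; [exists p; exact Sp | split; [exact HS |]].
  intros U US [y Uy] HU.
  destruct (classic (U p)) as [Up | Up]; [exact (Hgen U US HU Up) |].
  exfalso.
  assert (HW : f_invariant g (fun x => S x /\ ~ U x)) by (apply f_invariant_setD; auto).
  destruct (Hgen _ (fun x Hx => proj1 Hx) HW (conj Sp Up) y (US y Uy)) as [_ nUy].
  exact (nUy Uy).
Qed.

Lemma cycle_meet_eq g R S : is_cycle g R -> is_cycle g S ->
  (exists x, R x /\ S x) -> R = S.
Proof.
  intros [_ [HR Rmin]] [_ [HS Smin]] [y [Ry Sy]].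
  assert (HRS : f_invariant g (fun x => R x /\ S x)).
  { intro z. specialize (HR z); specialize (HS z); tauto. }
  apply functional_extensionality; intro x; apply propositional_extensionality.
  split; intro Hx.
  - exact (proj2 (Rmin _ (fun z Hz => proj1 Hz) (ex_intro _ y (conj Ry Sy)) HRS x Hx)).
  - exact (proj1 (Smin _ (fun z Hz => proj2 Hz) (ex_intro _ y (conj Ry Sy)) HRS x Hx)).
Qed.

Lemma cycle_disjoint_infinite g R T : is_cycle g R -> is_finite R ->
  is_cycle g T -> ~ is_finite T -> forall x, R x -> ~ T x.
Proof.
  intros HR Rfin HT Tinf x Rx Tx.
  rewrite <- (cycle_meet_eq g R T HR HT (ex_intro _ x (conj Rx Tx))) in Tinf.
  exact (Tinf Rfin).
Qed.

Lemma has_card_is_finite S n : has_card S n -> is_finite S.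
Proof. intros [l [_ [_ Hl]]]. exists l. intros x Sx. apply Hl, Sx. Qed.

Lemma has_card_unique S m n : has_card S m -> has_card S n -> m = n.
Proof.
  intros [l [Nl [<- Hl]]] [l' [Nl' [<- Hl']]].
  apply PeanoNat.Nat.le_antisymm; apply NoDup_incl_length; auto; intros x Hx.
  - apply Hl', Hl, Hx.
  - apply Hl, Hl', Hx.
Qed.

Lemma not_finite_setD T C : ~ is_finite T -> is_finite C ->
  ~ is_finite (fun x => T x /\ ~ C x).
Proof.
  intros Tinf [lC HC] [l Hl]. apply Tinf. exists (l ++ lC). intros x Tx.
  apply in_or_app. destruct (classic (C x)) as [Cx | Cx]; [right; auto | left; auto].
Qed.

Lemma f_invariant_agree_off f g T U : f_invariant g T ->
  (forall x, ~ T x -> g x = f x) -> (forall x, U x -> ~ T x) ->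
  f_invariant f U -> f_invariant g U.
Proof.
  intros Tg agree UT HU x. destruct (classic (T x)) as [Tx | Tx].
  - split; intro H; exfalso; [apply (UT _ H), Tg, Tx | exact (UT _ H Tx)].
  - rewrite (agree x Tx). apply HU.
Qed.

Lemma is_cycle_agree_off f g T R : f_invariant f T -> f_invariant g T ->
  (forall x, ~ T x -> g x = f x) -> (forall x, R x -> ~ T x) ->
  is_cycle f R -> is_cycle g R.
Proof.
  intros Tf Tg agree RT [Rne [HR Rmin]].
  split; [exact Rne | split; [exact (f_invariant_agree_off f g T R Tg agree RT HR) |]].
  intros U UR Une HU. apply (Rmin U UR Une).
  apply (f_invariant_agree_off g f T U Tf); [| intros x Ux; exact (RT x (UR x Ux)) | exact HU].
  intros x Tx. symmetry. exact (agree x Tx).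
Qed.

End CycleBasics.

Section Equipotence.
Context {A : Type}.

Lemma equipotent_sig_iff (P Q : A -> Prop) :
  (forall x, P x <-> Q x) -> equipotent {x | P x} {x | Q x}.
Proof.
  intros PQ.
  exists (fun s => exist Q (proj1_sig s) (proj1 (PQ _) (proj2_sig s))).
  exists (fun s => exist P (proj1_sig s) (proj2 (PQ _) (proj2_sig s))).
  split; intros s; apply eq_sig_hprop; auto using proof_irrelevance.
Qed.

Lemma equipotent_sig_option (P Q : A -> Prop) (c : A) :
  (forall x, P x <-> Q x \/ x = c) -> ~ Q c ->
  equipotent {x | P x} (option {x | Q x}).
Proof.
  intros PQ Qc.
  assert (toQ : forall x, P x -> x <> c -> Q x).
  { intros x Px xc. destruct (proj1 (PQ x) Px); [assumption | contradiction]. }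
  exists (fun s => match excluded_middle_informative (proj1_sig s = c) with
           | left _ => None
           | right ne => Some (exist Q (proj1_sig s) (toQ _ (proj2_sig s) ne))
           end).
  exists (fun o => match o with
           | Some s => exist P (proj1_sig s) (proj2 (PQ _) (or_introl (proj2_sig s)))
           | None => exist P c (proj2 (PQ c) (or_intror eq_refl))
           end).
  split.
  - intros [x Px]; simpl.
    destruct (excluded_middle_informative (x = c)) as [-> | ne];
      apply eq_sig_hprop; auto using proof_irrelevance.
  - intros [[x Qx] |]; simpl.
    + destruct (excluded_middle_informative (x = c)) as [-> | ne]; [contradiction |].
      f_equal. apply eq_sig_hprop; auto using proof_irrelevance.
    + destruct (excluded_middle_informative (c = c)) as [_ | ne]; [reflexivity | contradiction].
Qed.

End Equipotence.

Section SplitCycle.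
Context {O : Type}.
Variables (f g : O -> O) (T C : O -> Prop) (n : nat).
Hypotheses (HT : is_cycle f T) (T_infinite : ~ is_finite T)
  (Tg : f_invariant g T) (agree : forall x, ~ T x -> g x = f x)
  (HC : is_cycle g C) (C_card : has_card C n) (CT : forall x, C x -> T x)
  (HTC : is_cycle g (fun x => T x /\ ~ C x)).

Lemma finite_cycle_split_iff R :
  is_finite R -> is_cycle g R <-> is_cycle f R \/ R = C.
Proof.
  intros Rfin. split.
  - intros HR. destruct (classic (exists x, R x /\ C x)) as [RC | RnC].
    + right. exact (cycle_meet_eq g R C HR HC RC).
    + left. apply (is_cycle_agree_off g f T); [exact Tg | exact (proj1 (proj2 HT)) | | | exact HR].
      * intros x Tx. symmetry. exact (agree x Tx).
      * intros x Rx Tx.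
        apply (cycle_disjoint_infinite g R _ HR Rfin HTC
                 (not_finite_setD T C T_infinite (has_card_is_finite C n C_card)) x Rx).
        split; [exact Tx | intro Cx; apply RnC; eauto].
  - intros [HR | ->]; [| exact HC].
    exact (is_cycle_agree_off f g T R (proj1 (proj2 HT)) Tg agree
             (cycle_disjoint_infinite f R T HR Rfin HT T_infinite) HR).
Qed.

Lemma cycles_of_size_split :
  equipotent (cycles_of_size g n) (option (cycles_of_size f n)).
Proof.
  apply (equipotent_sig_option _ _ C).
  - intros R. split.
    + intros [HR Rcard].
      destruct (proj1 (finite_cycle_split_iff R (has_card_is_finite R n Rcard)) HR) as [H | ->];
        [left; split | right]; auto.
    + intros [[HR Rcard] | ->]; [| split; [exact HC | exact C_card]].
      split; [| exact Rcard].
      apply (finite_cycle_split_iff R (has_card_is_finite R n Rcard)). left; exact HR.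
  - intros [HfC _]. destruct (proj1 HC) as [x Cx].
    exact (cycle_disjoint_infinite f C T HfC (has_card_is_finite C n C_card) HT T_infinite
             x Cx (CT x Cx)).
Qed.

Lemma cycles_of_size_other m : m <> n ->
  equipotent (cycles_of_size g m) (cycles_of_size f m).
Proof.
  intros mn. apply equipotent_sig_iff. intros R.
  split; intros [HR Rcard]; split; [| exact Rcard | | exact Rcard];
    pose proof (finite_cycle_split_iff R (has_card_is_finite R m Rcard)) as E.
  - destruct (proj1 E HR) as [H | ->]; [exact H |].
    exfalso. exact (mn (has_card_unique C m n Rcard C_card)).
  - apply E. left; exact HR.
Qed.

End SplitCycle.

Section Iterates.
Context {O : Type}.
Variables (f : O -> O) (a : O).

Definition iter_prefix (k : nat) : O -> Prop :=
  fun x => exists i, i < k /\ x = Nat.iter i f a.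

Lemma iter_prefix_In k x :
  iter_prefix k x <-> In x (map (fun i => Nat.iter i f a) (seq 0 k)).
Proof.
  rewrite in_map_iff. split.
  - intros [i [Hi ->]]. exists i. split; [reflexivity | apply in_seq; lia].
  - intros [i [<- Hi]]. apply in_seq in Hi. exists i. split; [lia | reflexivity].
Qed.

Lemma iter_prefix_finite k : is_finite (iter_prefix k).
Proof. exists (map (fun i => Nat.iter i f a) (seq 0 k)). intros x. apply iter_prefix_In. Qed.

Lemma iter_prefix_card k : (forall i j, Nat.iter i f a = Nat.iter j f a -> i = j) ->
  has_card (iter_prefix k) k.
Proof.
  intros Hinj. exists (map (fun i => Nat.iter i f a) (seq 0 k)). split; [| split].
  - apply Injective_map_NoDup; [exact Hinj | apply seq_NoDup].
  - rewrite length_map, length_seq. reflexivity.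
  - apply iter_prefix_In.
Qed.

Hypothesis Hf : injective f.

Lemma iter_cancel i j : Nat.iter (i + j) f a = Nat.iter i f a -> Nat.iter j f a = a.
Proof. induction i as [| i IH]; simpl; [auto | intros E; apply IH, Hf, E]. Qed.

Lemma iter_prefix_periodic k : Nat.iter (S k) f a = a -> f_invariant f (iter_prefix (S k)).
Proof.
  intros Hper. apply f_invariant_of_image; [exact Hf | |].
  - intros x [i [Hi ->]]. destruct (PeanoNat.Nat.eq_dec i k) as [-> | ne].
    + exists 0. split; [lia | exact Hper].
    + exists (S i). split; [lia | reflexivity].
  - intros y [[| i] [Hi ->]].
    + exists (Nat.iter k f a). split; [exists k; split; [lia | reflexivity] | exact Hper].
    + exists (Nat.iter i f a). split; [exists i; split; [lia | reflexivity] | reflexivity].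
Qed.

(* A repetition makes [a] periodic, and the finite orbit of [a] would then be
   a nonempty invariant subset of [T]. *)
Lemma iter_injective_on_infinite_cycle T : is_cycle f T -> ~ is_finite T -> T a ->
  forall i j, Nat.iter i f a = Nat.iter j f a -> i = j.
Proof.
  intros [_ [HT Tmin]] Tinf Ta.
  assert (aperiodic : forall i k, Nat.iter (i + S k) f a <> Nat.iter i f a).
  { intros i k E. apply Tinf.
    destruct (iter_prefix_finite (S k)) as [l Hl]. exists l. intros x Tx. apply Hl.
    apply (Tmin (iter_prefix (S k))); [| exists a, 0; split; [lia | reflexivity] |
                                         exact (iter_prefix_periodic k (iter_cancel _ _ E)) | exact Tx].
    intros y [r [_ ->]]. apply f_invariant_iter; assumption. }
  intros i j E. destruct (PeanoNat.Nat.lt_trichotomy i j) as [L | [L | L]]; [exfalso | exact L | exfalso].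
  - apply (aperiodic i (j - i - 1)). replace (i + S (j - i - 1)) with j by lia. auto.
  - apply (aperiodic j (i - j - 1)). replace (j + S (i - j - 1)) with i by lia. auto.
Qed.

End Iterates.

Section Swap.
Context {O : Type}.
Variables a b : O.

Definition swap (x : O) : O :=
  if excluded_middle_informative (x = a) then b
  else if excluded_middle_informative (x = b) then a else x.

Lemma swap_l : swap a = b.
Proof. unfold swap. destruct (excluded_middle_informative (a = a)); congruence. Qed.

Lemma swap_r : swap b = a.
Proof.
  unfold swap. destruct (excluded_middle_informative (b = a)); [congruence |].
  destruct (excluded_middle_informative (b = b)); congruence.
Qed.

Lemma swap_other x : x <> a -> x <> b -> swap x = x.
Proof.
  intros xa xb. unfold swap.
  destruct (excluded_middle_informative (x = a)); [congruence |].
  destruct (excluded_middle_informative (x = b)); congruence.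
Qed.

Lemma swap_cases (P : O -> Prop) : P a -> P b -> forall x, P x -> P (swap x).
Proof.
  intros Pa Pb x Px. destruct (classic (x = a)) as [-> | xa]; [rewrite swap_l; exact Pb |].
  destruct (classic (x = b)) as [-> | xb]; [rewrite swap_r; exact Pa |].
  rewrite swap_other; assumption.
Qed.

Lemma swap_involutive x : swap (swap x) = x.
Proof.
  destruct (classic (x = a)) as [-> | xa]; [rewrite swap_l; apply swap_r |].
  destruct (classic (x = b)) as [-> | xb]; [rewrite swap_r; apply swap_l |].
  rewrite (swap_other x xa xb). exact (swap_other x xa xb).
Qed.

Lemma swap_mem (V : O -> Prop) : V a -> V b -> forall x, V (swap x) <-> V x.
Proof.
  intros Va Vb x. split; [rewrite <- (swap_involutive x) at 2 |]; apply swap_cases; auto.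
Qed.

Lemma swap_is_transposition : a <> b -> is_transposition swap.
Proof.
  intros ab. exists a, b. split; [exact ab | split; [apply swap_l | split; [apply swap_r |]]].
  exact swap_other.
Qed.

Lemma injective_comp_swap (f : O -> O) : injective f -> injective (comp f swap).
Proof.
  intros Hf x y E. apply Hf.
  rewrite <- (swap_involutive (f x)), <- (swap_involutive (f y)). exact (f_equal swap E).
Qed.

Lemma f_invariant_comp_swap (f : O -> O) (V : O -> Prop) : V a -> V b ->
  f_invariant (comp f swap) V <-> f_invariant f V.
Proof.
  intros Va Vb. unfold f_invariant, comp.
  split; intros H x; rewrite <- (H x); [symmetry |]; apply swap_mem; auto.
Qed.

End Swap.

Section CutOffCycle.
Context {O : Type}.
Variables (f : O -> O) (T : O -> Prop) (a : O) (n : nat).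
Hypotheses (Hf : injective f) (HT : is_cycle f T) (T_infinite : ~ is_finite T)
  (Ta : T a) (Hn : 0 < n).

Local Notation it k := (Nat.iter k f a).
Let b := it n.
Let g := comp f (swap a b).
Let C := iter_prefix f a n.

Lemma it_inj i j : it i = it j -> i = j.
Proof. exact (iter_injective_on_infinite_cycle f a Hf T HT T_infinite Ta i j). Qed.

Lemma it_in_T k : T (it k).
Proof. apply f_invariant_iter; [exact (proj1 (proj2 HT)) | exact Ta]. Qed.

Lemma a_neq_b : a <> b.
Proof. intro E. pose proof (it_inj 0 n E). lia. Qed.

Lemma C_subset_T x : C x -> T x.
Proof. intros [i [_ ->]]. apply it_in_T. Qed.

Lemma C_card : has_card C n.
Proof. apply iter_prefix_card, it_inj. Qed.

Lemma T_comp_invariant : f_invariant g T.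
Proof. apply f_invariant_comp_swap; [exact Ta | apply it_in_T | exact (proj1 (proj2 HT))]. Qed.

Lemma comp_agree_off_T x : ~ T x -> g x = f x.
Proof.
  intros Tx. apply swap_other; intro E; apply Tx, (proj1 (proj2 HT)); rewrite E;
    [exact Ta | apply it_in_T].
Qed.

Lemma comp_it_succ i : S i < n -> g (it i) = it (S i).
Proof.
  intros Hi. apply swap_other; intro E; [apply (it_inj (S i) 0) in E | apply it_inj in E]; lia.
Qed.

Lemma comp_it_last : g (it (n - 1)) = a.
Proof.
  unfold g, comp. change (f (it (n - 1))) with (it (S (n - 1))).
  replace (S (n - 1)) with n by lia. apply swap_r.
Qed.

Lemma C_cycle : is_cycle g C.
Proof.
  assert (Ca : C a) by (exists 0; split; [lia | reflexivity]).
  assert (HC : f_invariant g C).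
  { apply f_invariant_of_image; [apply injective_comp_swap, Hf | |].
    - intros x [i [Hi ->]]. destruct (PeanoNat.Nat.eq_dec (S i) n) as [E | E].
      + replace i with (n - 1) by lia. rewrite comp_it_last. exact Ca.
      + rewrite comp_it_succ by lia. exists (S i). split; [lia | reflexivity].
    - intros y [[| j] [Hj ->]].
      + exists (it (n - 1)). split; [exists (n - 1); split; [lia | reflexivity] | apply comp_it_last].
      + exists (it j). split; [exists j; split; [lia | reflexivity] | apply comp_it_succ; lia]. }
  apply (is_cycle_of_generator g C a HC Ca).
  intros U _ HU Ua x [i [Hi ->]].
  induction i as [| i IH]; [exact Ua |].
  rewrite <- comp_it_succ by exact Hi. apply HU, IH. lia.
Qed.

(* An invariant [U] through [b] together with [C] contains both [a] and [b],
   so it is [f]-invariant as well, hence contains all of [T]. *)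
Lemma T_minus_C_cycle : is_cycle g (fun x => T x /\ ~ C x).
Proof.
  pose proof C_cycle as [_ [HC _]].
  assert (Ca : C a) by (exists 0; split; [lia | reflexivity]).
  apply (is_cycle_of_generator g _ b).
  - apply f_invariant_setD; [exact T_comp_invariant | exact HC].
  - split; [apply it_in_T |]. intros [i [Hi E]]. apply it_inj in E. lia.
  - intros U UT HU Ub x [Tx Cx].
    assert (HV : f_invariant f (fun x => U x \/ C x)).
    { apply (f_invariant_comp_swap a b); [right; exact Ca | left; exact Ub |].
      apply f_invariant_setU; assumption. }
    assert (VT : forall y, U y \/ C y -> T y).
    { intros y [Uy | Cy]; [exact (proj1 (UT y Uy)) | exact (C_subset_T y Cy)]. }
    destruct (proj2 (proj2 HT) _ VT (ex_intro _ a (or_intror Ca)) HV x Tx);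
      [assumption | contradiction].
Qed.

Lemma cut_off_cycles_of_size_split :
  equipotent (cycles_of_size g n) (option (cycles_of_size f n)).
Proof.
  exact (cycles_of_size_split f g T C n HT T_infinite T_comp_invariant comp_agree_off_T
           C_cycle C_card C_subset_T T_minus_C_cycle).
Qed.

Lemma cut_off_cycles_of_size_other m : m <> n ->
  equipotent (cycles_of_size g m) (cycles_of_size f m).
Proof.
  exact (cycles_of_size_other f g T C n HT T_infinite T_comp_invariant comp_agree_off_T
           C_cycle C_card T_minus_C_cycle m).
Qed.

End CutOffCycle.

Theorem mainTheorem9 (Omega : Type) (HOmega : countably_infinite Omega)
  (f : Omega -> Omega) (Hf : injective f)
  (Hinf : exists S : Omega -> Prop, is_cycle f S /\ ~ is_finite S)
  (n : nat) (Hn : 0 < n) :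
  exists h : Omega -> Omega, is_transposition h /\
    (* (fh)C_n = (f)C_n + 1, with cardinal addition realised by [option] *)
    equipotent (cycles_of_size (comp f h) n) (option (cycles_of_size f n)) /\
    (forall m : nat, 0 < m -> m <> n ->
       equipotent (cycles_of_size (comp f h) m) (cycles_of_size f m)).
Proof.
  destruct Hinf as [T [HT T_infinite]].
  destruct (proj1 HT) as [a Ta].
  exists (swap a (Nat.iter n f a)). split; [| split].
  - apply swap_is_transposition, (a_neq_b f T a n); assumption.
  - apply (cut_off_cycles_of_size_split f T a n); assumption.
  - intros m _. apply (cut_off_cycles_of_size_other f T a n); assumption.
Qed.
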